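(* The matrix $$R_\Omega=\begin{pmatrix}q&0&0&0\\0&q&q-q^{-1}&0\\0&0&q^{-1}&0\\0&0&0&-q^{-1}\end{pmatrix}$$ is superizable with $p(1)=0$, $p(2)=1$, and the super FRT bialgebra $A(\underline R_\Omega)$ of $\underline R_\Omega^a{}_c{}^b{}_d=(-1)^{p(a)p(b)}(R_\Omega)^a{}_c{}^b{}_d$ is the super-bialgebra generated by $1$ and $\mathbf u=\begin{pmatrix}\alpha&\beta\\\gamma&\delta\end{pmatrix}$, $\alpha,\delta$ even and $\beta,\gamma$ odd, with relations $\beta\alpha=\alpha\beta$, $\gamma\alpha=q^2\alpha\gamma$, $\delta\beta=\beta\delta$, $\delta\gamma=q^{-2}\gamma\delta$, $\gamma\beta=-q^2\beta\gamma$, $\delta\alpha-\alpha\delta=(1-q^2)\beta\gamma$, $\beta^2=\gamma^2=0$, and matrix super-coproduct $\underline\Delta\mathbf u=\mathbf u\otimes\mathbf u$, $\underline\varepsilon(\mathbf u)=\mathrm{id}$. If $\alpha,\delta$ are made invertible, one obtains a super-quantum group $GL^\Omega_q(1|1)$ with antipode $\underline S(\mathbf u)=\begin{pmatrix}\alpha^{-1}+\alpha^{-1}\beta\delta^{-1}\gamma\alpha^{-1}&-\alpha^{-1}\beta\delta^{-1}\\-\delta^{-1}\gamma\alpha^{-1}&\delta^{-1}+\delta^{-1}\gamma\alpha^{-1}\beta\delta^{-1}\end{pmatrix}$, and the super-determinant $\underline{\det}(\mathbf u)=\alpha\delta^{-1}-\beta\delta^{-1}\gamma\delta^{-1}$ is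 a central, even, group-like element.
   Context: $4\times4$ matrices have entries $R^a{}_c{}^b{}_d$ with row index $(a,b)$, column $(c,d)$, ordered $11,12,21,22$; repeated indices summed. $R$ is superizable w.r.t. $p$ if $R^a{}_c{}^b{}_d=0$ whenever $p(a)+p(b)-p(c)-p(d)\not\equiv0\pmod2$. The super FRT bialgebra $A(\underline R)$ is generated by $1$ and $u^i{}_j$ of degree $p(i)+p(j)$ with relations $(-1)^{p(a)p(b)+p(c)p(e)}\underline R^a{}_f{}^b{}_e\,u^f{}_c\,u^e{}_d=(-1)^{p(c)p(d)+p(r)p(a)}u^b{}_r\,u^a{}_s\,\underline R^s{}_c{}^r{}_d$, super-coproduct $\underline\Delta u^i{}_j=\sum_ku^i{}_k\otimes u^k{}_j$ in the graded tensor product, counit $\delta^i_j$; here $u^1{}_1=\alpha$, $u^1{}_2=\beta$, $u^2{}_1=\gamma$, $u^2{}_2=\delta$. *)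

From HB Require Import structures.
From mathcomp Require Import all_boot all_order all_algebra.
Set Implicit Arguments. Unset Strict Implicit. Unset Printing Implicit Defensive.
Import GRing.Theory.
Local Open Scope ring_scope.

(* Indices 1,2 of the paper are the ordinals 0,1 of 'I_2. *)
Notation i1 := (@ord0 1).
Notation i2 := (@ord_max 1).

Definition par (i : 'I_2) : nat := nat_of_ord i.

(* A family of entries R^a_c^b_d is written  R a c b d. *)
Definition superizable {k : nzRingType} (R : 'I_2 -> 'I_2 -> 'I_2 -> 'I_2 -> k)
  (p : 'I_2 -> nat) : Prop :=
  forall a c b d : 'I_2,
    ~~ (2 %| ((p a)%:Z + (p b)%:Z - (p c)%:Z - (p d)%:Z))%Z -> R a c b d = 0.

(* R_Omega as a 4x4 matrix: row (a,b) and column (c,d), ordered 11,12,21,22,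
   i.e. row index 2a+b and column index 2c+d (0-based). *)
Definition R_Omega {k : fieldType} (q : k) (a c b d : 'I_2) : k :=
  match (2 * a + b)%N, (2 * c + d)%N with
  | 0, 0 => q
  | 1, 1 => q
  | 1, 2 => q - q^-1
  | 2, 2 => q^-1
  | 3, 3 => - q^-1
  | _, _ => 0
  end.

Definition super_R {k : nzRingType} (R : 'I_2 -> 'I_2 -> 'I_2 -> 'I_2 -> k)
  (p : 'I_2 -> nat) (a c b d : 'I_2) : k :=
  (-1) ^+ (p a * p b) * R a c b d.

Definition FRT_rel {k : nzRingType} {A : lalgType k}
  (Rs : 'I_2 -> 'I_2 -> 'I_2 -> 'I_2 -> k) (p : 'I_2 -> nat)
  (u : 'I_2 -> 'I_2 -> A) : Prop :=
  forall a b c d : 'I_2,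
    \sum_(e < 2) \sum_(f < 2)
       (((-1) ^+ (p a * p b + p c * p e) * Rs a f b e) *: (u f c * u e d))
    = \sum_(r < 2) \sum_(s < 2)
       (((-1) ^+ (p c * p d + p r * p a) * Rs s c r d) *: (u b r * u a s)).

(* The listed relations, with  alpha = u i1 i1, beta = u i1 i2,
   gamma = u i2 i1, delta = u i2 i2, where  pr i j k l  stands for the
   product of the generators u^i_j and u^k_l (so that the same relations can
   be written for an opposite / super-opposite product). *)
Definition GL_relP {k : fieldType} {A : lalgType k} (q : k)
  (pr : 'I_2 -> 'I_2 -> 'I_2 -> 'I_2 -> A) : Prop :=
  (pr i1 i2 i1 i1 = pr i1 i1 i1 i2 /\
      pr i2 i1 i1 i1 = q ^+ 2 *: pr i1 i1 i2 i1 /\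
      pr i2 i2 i1 i2 = pr i1 i2 i2 i2 /\
      pr i2 i2 i2 i1 = q ^- 2 *: pr i2 i1 i2 i2 /\
      pr i2 i1 i1 i2 = - (q ^+ 2) *: pr i1 i2 i2 i1 /\
      pr i2 i2 i1 i1 - pr i1 i1 i2 i2 = (1 - q ^+ 2) *: pr i1 i2 i2 i1/\
      pr i1 i2 i1 i2 = 0 /\
    pr i2 i1 i2 i1 = 0).

Definition GL_rel {k : fieldType} {A : lalgType k} (q : k)
  (u : 'I_2 -> 'I_2 -> A) : Prop :=
  GL_relP q (fun i j k l => u i j * u k l).

(* Elements x i j and y k l supercommute (images of u^i_j (x) 1 and 1 (x) u^k_l
   in the graded tensor product). *)
Definition supercomm {A : nzRingType} (p : 'I_2 -> nat)
  (x y : 'I_2 -> 'I_2 -> A) : Prop :=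
  forall i j k l : 'I_2,
    x i j * y k l = (-1) ^+ ((p i + p j) * (p k + p l)) * (y k l * x i j).

Definition mxprod {A : nzRingType} (x y : 'I_2 -> 'I_2 -> A) : 'I_2 -> 'I_2 -> A :=
  fun i j => \sum_(m < 2) x i m * y m j.

(* Identity 2x2 family (value of the counit on u). *)
Definition id2 {A : nzRingType} : 'I_2 -> 'I_2 -> A := fun i j => (i == j)%:R.

Definition antipode {A : unitRingType} (u : 'I_2 -> 'I_2 -> A) : 'I_2 -> 'I_2 -> A :=
  let al := u i1 i1 in let be := u i1 i2 in
  let ga := u i2 i1 in let de := u i2 i2 in
  fun i j =>
  if i == i1 then
    if j == i1 then al^-1 + al^-1 * be * de^-1 * ga * al^-1
    else - (al^-1 * be * de^-1)
  else
    if j == i1 then - (de^-1 * ga * al^-1)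
    else de^-1 + de^-1 * ga * al^-1 * be * de^-1.

Definition sdet {A : unitRingType} (u : 'I_2 -> 'I_2 -> A) : A :=
  u i1 i1 * (u i2 i2)^-1 - u i1 i2 * (u i2 i2)^-1 * u i2 i1 * (u i2 i2)^-1.

Definition parity_inv {k : fieldType} {A : lalgType k} (p : 'I_2 -> nat)
  (u : 'I_2 -> 'I_2 -> A) : 'I_2 -> 'I_2 -> A :=
  fun i j => (-1) ^+ (p i + p j) *: u i j.

(* Every identity to be proved is an equation between noncommutative polynomials
   in alpha, beta, gamma, delta (and alpha^-1, delta^-1) modulo the defining
   relations. Oriented towards the ordered monomials alpha^i delta^j beta^e gamma^f,
   the relations form a rewriting system; adding the rules for the inverses
   (each derived from the previous ones) and the super-commutation rules between
   the two tensor factors, every such identity is decided by computing normal forms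
   with coefficients in Z[q, q^-1], which a reflexive normalizer does soundly.
   Conversely, each listed relation is a scalar multiple of a difference of two
   instances of the FRT relations. *)

From HB Require Import structures.
From mathcomp Require Import all_boot all_order all_algebra.
From mathcomp Require Import ring.
From Stdlib Require Import FunctionalExtensionality.
Import GRing.Theory.
Local Open Scope ring_scope.
Set Implicit Arguments. Unset Strict Implicit. Unset Printing Implicit Defensive.

(* Laurent polynomials in q as lists of (exponent, coefficient) pairs. *)
Definition laurent := seq (int * int).

Fixpoint laurent_ins (t : int * int) (c : laurent) : laurent :=
  if c is u :: c' then
    if u.1 == t.1 then (u.1, u.2 + t.2) :: c' else u :: laurent_ins t c'
  else [:: t].

Definition laurent_add (c1 c2 : laurent) : laurent := foldr laurent_ins c2 c1.

Definition laurent_addmul (t : int * int) (c acc : laurent) : laurent :=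
  foldr (fun u => laurent_ins (t.1 + u.1, t.2 * u.2)) acc c.

Definition laurent_mul (c1 c2 : laurent) : laurent :=
  foldr (fun t => laurent_addmul t c2) [::] c1.

Definition laurent_opp (c : laurent) : laurent := [seq (t.1, - t.2) | t <- c].

Definition laurent_clean (c : laurent) : laurent := [seq t <- c | t.2 != 0].

Inductive scal :=
| Sq of nat | Sqinv of nat | Sone | Szero
| Sadd of scal & scal | Smul of scal & scal | Sopp of scal | Sexp of scal & nat
| SRomega of bool & bool & bool & bool.

Definition ord_of_bool (b : bool) : 'I_2 := if b then i2 else i1.

Definition laurent_superR (a c b d : bool) : laurent :=
  match a, c, b, d with
  | false, false, false, false => [:: (1, 1)]
  | false, false, true, true => [:: (1, 1)]
  | false, true, true, false => [:: (1, 1); (-1, -1)]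
  | true, true, false, false => [:: (-1, 1)]
  | true, true, true, true => [:: (-1, 1)]
  | _, _, _, _ => [::]
  end.

Fixpoint laurent_of_scal (s : scal) : laurent :=
  match s with
  | Sq n => [:: (n%:Z, 1)]
  | Sqinv n => [:: (- n%:Z, 1)]
  | Sone => [:: (0, 1)]
  | Szero => [::]
  | Sadd x y => laurent_add (laurent_of_scal x) (laurent_of_scal y)
  | Smul x y => laurent_mul (laurent_of_scal x) (laurent_of_scal y)
  | Sopp x => laurent_opp (laurent_of_scal x)
  | Sexp x n => iter n (laurent_mul (laurent_of_scal x)) [:: (0, 1)]
  | SRomega a c b d => laurent_superR a c b d
  end.

Section LaurentEval.
Variables (k : fieldType) (q : k).
Hypothesis q_neq0 : q != 0.

Definition laurent_eval (c : laurent) : k := \sum_(t <- c) t.2%:~R * q ^ t.1.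

Fixpoint scal_eval (s : scal) : k :=
  match s with
  | Sq n => q ^+ n
  | Sqinv n => q ^- n
  | Sone => 1
  | Szero => 0
  | Sadd x y => scal_eval x + scal_eval y
  | Smul x y => scal_eval x * scal_eval y
  | Sopp x => - scal_eval x
  | Sexp x n => scal_eval x ^+ n
  | SRomega a c b d =>
      super_R (R_Omega q) par (ord_of_bool a) (ord_of_bool c) (ord_of_bool b)
        (ord_of_bool d)
  end.

Lemma laurent_eval1 : laurent_eval [:: (0, 1)] = 1.
Proof. by rewrite /laurent_eval big_seq1 expr0z mulr1. Qed.

Lemma laurent_evalN1 : laurent_eval [:: (0, -1)] = -1.
Proof. by rewrite /laurent_eval big_seq1 expr0z mulr1. Qed.

Lemma laurent_eval_ins t c :
  laurent_eval (laurent_ins t c) = t.2%:~R * q ^ t.1 + laurent_eval c.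
Proof.
rewrite /laurent_eval; elim: c => [|u c IHc] /=.
  by rewrite big_seq1 big_nil addr0.
case: eqP => [eq_u_t|_]; rewrite !big_cons ?IHc; last by rewrite addrCA.
by rewrite /= eq_u_t intrD mulrDl (addrC (u.2%:~R * _)) -addrA.
Qed.

Lemma laurent_eval_add c1 c2 :
  laurent_eval (laurent_add c1 c2) = laurent_eval c1 + laurent_eval c2.
Proof.
elim: c1 => [|t c1 IHc1]; first by rewrite /laurent_eval big_nil add0r.
by rewrite /= laurent_eval_ins IHc1 /laurent_eval big_cons addrA.
Qed.

Lemma laurent_eval_addmul t c acc :
  laurent_eval (laurent_addmul t c acc) =
  t.2%:~R * q ^ t.1 * laurent_eval c + laurent_eval acc.
Proof.
elim: c => [|u c IHc]; first by rewrite /laurent_eval big_nil mulr0 add0r.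
rewrite /= laurent_eval_ins IHc /laurent_eval big_cons mulrDr addrA /=.
by rewrite intrM expfzDr //; congr (_ + _ + _); ring.
Qed.

Lemma laurent_eval_mul c1 c2 :
  laurent_eval (laurent_mul c1 c2) = laurent_eval c1 * laurent_eval c2.
Proof.
elim: c1 => [|t c1 IHc1]; first by rewrite /laurent_eval big_nil mul0r.
by rewrite /= laurent_eval_addmul IHc1 /laurent_eval big_cons mulrDl.
Qed.

Lemma laurent_eval_opp c : laurent_eval (laurent_opp c) = - laurent_eval c.
Proof. by rewrite /laurent_eval big_map -sumrN; apply: eq_bigr => t _; rewrite intrN mulNr. Qed.

Lemma laurent_eval_clean c : laurent_eval (laurent_clean c) = laurent_eval c.
Proof.
rewrite /laurent_eval big_filter big_rmcond // => t.
by rewrite negbK => /eqP ->; rewrite mul0r.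
Qed.

Lemma laurent_eval_superR a c b d :
  laurent_eval (laurent_superR a c b d) =
  super_R (R_Omega q) par (ord_of_bool a) (ord_of_bool c) (ord_of_bool b)
    (ord_of_bool d).
Proof.
rewrite /super_R /R_Omega /laurent_eval.
by case: a; case: c; case: b; case: d;
  rewrite /= ?big_cons ?big_nil ?muln0 ?mul0n ?expr0 ?mulr0 ?mul1r ?addr0 //
    ?(intrN _ 1) ?mulN1r ?mul1r ?expr1z ?exprN1 ?expr1 ?mulN1r ?opprK.
Qed.

Lemma laurent_eval_of_scal s : laurent_eval (laurent_of_scal s) = scal_eval s.
Proof.
elim: s => [n|n|||x IHx y IHy|x IHx y IHy|x IHx|x IHx n|a c b d] /=;
  rewrite ?laurent_eval_add ?laurent_eval_mul ?laurent_eval_opp ?IHx ?IHy //.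
- by rewrite /laurent_eval big_seq1 mul1r.
- by rewrite /laurent_eval big_seq1 mul1r exprnN.
- exact: laurent_eval1.
- by rewrite /laurent_eval big_nil.
- elim: n => [|n IHn]; first exact: laurent_eval1.
  by rewrite /= laurent_eval_mul IHn IHx exprS.
- exact: laurent_eval_superR.
Qed.

End LaurentEval.

Definition word := seq nat.
Definition ncpoly := seq (laurent * word).
Definition rule := (nat * nat * seq (scal * word))%type.

Fixpoint ncpoly_ins (t : laurent * word) (p : ncpoly) : ncpoly :=
  if p is u :: p' then
    if u.2 == t.2 then
      if laurent_clean (laurent_add u.1 t.1) is [::] then p'
      else (laurent_clean (laurent_add u.1 t.1), u.2) :: p'
    else u :: ncpoly_ins t p'
  else if laurent_clean t.1 is [::] then [::] else [:: (laurent_clean t.1, t.2)].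

Definition ncpoly_add (p1 p2 : ncpoly) : ncpoly := foldr ncpoly_ins p2 p1.

Definition ncpoly_scale (c : laurent) (p : ncpoly) : ncpoly :=
  [seq (laurent_mul c t.1, t.2) | t <- p].

Definition ncpoly_mul (p1 p2 : ncpoly) : ncpoly :=
  [seq (laurent_mul t.1 u.1, t.2 ++ u.2) | t <- p1, u <- p2].

Definition ncpoly_one : ncpoly := [:: ([:: (0, 1)], [::])].

Definition rule_rhs (r : rule) : ncpoly :=
  [seq (laurent_of_scal t.1, t.2) | t <- r.2].

Fixpoint find_rule (rl : seq rule) (x y : nat) : option ncpoly :=
  if rl is r :: rl' then
    if (r.1.1 == x) && (r.1.2 == y) then Some (rule_rhs r) else find_rule rl' x y
  else None.

Fixpoint rewrite_word (rl : seq rule) (w : word) : option ncpoly :=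
  if w is x :: w' then
    if rewrite_word rl w' is Some p then Some [seq (t.1, x :: t.2) | t <- p]
    else if w' is y :: w'' then
      omap (map (fun t => (t.1, t.2 ++ w''))) (find_rule rl x y)
    else None
  else None.

Definition reduce_step (rl : seq rule) (p : ncpoly) : bool * ncpoly :=
  foldr (fun t acc =>
      if rewrite_word rl t.2 is Some p' then (true, ncpoly_add (ncpoly_scale t.1 p') acc.2)
      else (acc.1, ncpoly_ins t acc.2))
    (false, [::]) p.

Fixpoint normalize (rl : seq rule) (fuel : nat) (p : ncpoly) : ncpoly :=
  if fuel is n.+1 then
    let (progress, p') := reduce_step rl p in
    if progress then normalize rl n p' else p'
  else p.

Inductive ncexpr :=
| Xatom of nat | Xzero | Xone
| Xadd of ncexpr & ncexpr | Xmul of ncexpr & ncexpr | Xopp of ncexpr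
| Xscale of scal & ncexpr | Xexp of ncexpr & nat.

Fixpoint ncpoly_of (e : ncexpr) : ncpoly :=
  match e with
  | Xatom n => [:: ([:: (0, 1)], [:: n])]
  | Xzero => [::]
  | Xone => ncpoly_one
  | Xadd x y => ncpoly_of x ++ ncpoly_of y
  | Xmul x y => ncpoly_mul (ncpoly_of x) (ncpoly_of y)
  | Xopp x => ncpoly_scale [:: (0, -1)] (ncpoly_of x)
  | Xscale s x => ncpoly_scale (laurent_of_scal s) (ncpoly_of x)
  | Xexp x n => iter n (ncpoly_mul (ncpoly_of x)) ncpoly_one
  end.

Section NcpolyEval.
Variables (k : fieldType) (q : k) (A : algType k) (L : nat -> A).
Hypothesis q_neq0 : q != 0.

Definition word_eval (w : word) : A := \prod_(n <- w) L n.

Definition ncpoly_eval (p : ncpoly) : A :=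
  \sum_(t <- p) laurent_eval q t.1 *: word_eval t.2.

Fixpoint ncexpr_eval (e : ncexpr) : A :=
  match e with
  | Xatom n => L n
  | Xzero => 0
  | Xone => 1
  | Xadd x y => ncexpr_eval x + ncexpr_eval y
  | Xmul x y => ncexpr_eval x * ncexpr_eval y
  | Xopp x => - ncexpr_eval x
  | Xscale s x => scal_eval q s *: ncexpr_eval x
  | Xexp x n => ncexpr_eval x ^+ n
  end.

Definition rule_holds (r : rule) : Prop :=
  L r.1.1 * L r.1.2 = \sum_(t <- r.2) scal_eval q t.1 *: word_eval t.2.

Fixpoint rules_hold (rl : seq rule) : Prop :=
  if rl is r :: rl' then rule_holds r /\ rules_hold rl' else True.

Lemma rules_hold_cat rl1 rl2 :
  rules_hold (rl1 ++ rl2) <-> rules_hold rl1 /\ rules_hold rl2.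
Proof. by elim: rl1 => [|r rl1 IH] /=; [tauto | rewrite IH; tauto]. Qed.

Lemma ncpoly_eval_cons t p :
  ncpoly_eval (t :: p) = laurent_eval q t.1 *: word_eval t.2 + ncpoly_eval p.
Proof. exact: big_cons. Qed.

Lemma ncpoly_eval_ins t p :
  ncpoly_eval (ncpoly_ins t p) = laurent_eval q t.1 *: word_eval t.2 + ncpoly_eval p.
Proof.
elim: p => [|u p IHp] /=.
  rewrite -(laurent_eval_clean q t.1).
  by case: (laurent_clean t.1) => [|? ?]; rewrite ?ncpoly_eval_cons /ncpoly_eval big_nil
    ?scale0r ?addr0 /laurent_eval ?big_nil ?scale0r.
case: eqP => [eq_u_t|_]; rewrite !ncpoly_eval_cons; last by rewrite IHp addrCA.
have := laurent_eval_clean q (laurent_add u.1 t.1).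
rewrite laurent_eval_add => clean_sum; rewrite addrA -eq_u_t -scalerDl (addrC (laurent_eval q t.1)) -clean_sum.
case: (laurent_clean _) => [|c0 c]; last exact: ncpoly_eval_cons.
by rewrite /laurent_eval big_nil scale0r add0r.
Qed.

Lemma ncpoly_eval_add p1 p2 :
  ncpoly_eval (ncpoly_add p1 p2) = ncpoly_eval p1 + ncpoly_eval p2.
Proof.
elim: p1 => [|t p1 IH]; first by rewrite /ncpoly_eval big_nil add0r.
by rewrite /= ncpoly_eval_ins IH ncpoly_eval_cons addrA.
Qed.

Lemma ncpoly_eval_cat p1 p2 :
  ncpoly_eval (p1 ++ p2) = ncpoly_eval p1 + ncpoly_eval p2.
Proof. exact: big_cat. Qed.

Lemma ncpoly_eval_scale c p :
  ncpoly_eval (ncpoly_scale c p) = laurent_eval q c *: ncpoly_eval p.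
Proof.
rewrite /ncpoly_eval big_map scaler_sumr; apply: eq_bigr => t _.
by rewrite laurent_eval_mul // scalerA.
Qed.

Lemma ncpoly_eval_mul p1 p2 :
  ncpoly_eval (ncpoly_mul p1 p2) = ncpoly_eval p1 * ncpoly_eval p2.
Proof.
rewrite /ncpoly_eval /ncpoly_mul big_allpairs_dep mulr_suml; apply: eq_bigr => t _.
rewrite mulr_sumr; apply: eq_bigr => u _.
by rewrite laurent_eval_mul // /word_eval big_cat -scalerAl -scalerAr scalerA.
Qed.

Lemma ncpoly_eval_prepend x p :
  ncpoly_eval [seq (t.1, x :: t.2) | t <- p] = L x * ncpoly_eval p.
Proof.
rewrite /ncpoly_eval big_map mulr_sumr; apply: eq_bigr => t _.
by rewrite /word_eval big_cons scalerAr.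
Qed.

Lemma ncpoly_eval_append w p :
  ncpoly_eval [seq (t.1, t.2 ++ w) | t <- p] = ncpoly_eval p * word_eval w.
Proof.
rewrite /ncpoly_eval big_map mulr_suml; apply: eq_bigr => t _.
by rewrite /word_eval big_cat scalerAl.
Qed.

Lemma ncpoly_eval_of e : ncpoly_eval (ncpoly_of e) = ncexpr_eval e.
Proof.
have eval_one : ncpoly_eval ncpoly_one = 1.
  by rewrite /ncpoly_eval big_seq1 laurent_eval1 /word_eval big_nil scale1r.
elim: e => [n||| x IHx y IHy| x IHx y IHy| x IHx| s x IHx| x IHx n] /=.
- by rewrite /ncpoly_eval big_seq1 laurent_eval1 /word_eval big_seq1 scale1r.
- by rewrite /ncpoly_eval big_nil.
- exact: eval_one.
- by rewrite ncpoly_eval_cat IHx IHy.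
- by rewrite ncpoly_eval_mul IHx IHy.
- by rewrite ncpoly_eval_scale IHx laurent_evalN1 scaleN1r.
- by rewrite ncpoly_eval_scale IHx laurent_eval_of_scal.
- elim: n => [|n IHn] /=; first exact: eval_one.
  by rewrite ncpoly_eval_mul IHx IHn exprS.
Qed.

Section Rewriting.
Variable rl : seq rule.
Hypothesis rl_hold : rules_hold rl.

Lemma find_rule_sound x y p : find_rule rl x y = Some p -> L x * L y = ncpoly_eval p.
Proof.
elim: rl rl_hold => [|r rl' IH] //= [r_holds rl'_hold].
case: andP => [[/eqP <- /eqP <-] [<-]|_]; last exact: IH.
rewrite r_holds /ncpoly_eval big_map; apply: eq_bigr => t _.
by rewrite laurent_eval_of_scal.
Qed.

Lemma rewrite_word_sound w p : rewrite_word rl w = Some p -> ncpoly_eval p = word_eval w.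
Proof.
elim: w p => [|x w IH] p //=.
case def_p': (rewrite_word rl w) => [p'|].
  by move=> [<-]; rewrite ncpoly_eval_prepend (IH _ def_p') /word_eval big_cons.
case: w {IH def_p'} => [|y w] //.
case def_p0: (find_rule rl x y) => [p0|] //= [<-].
by rewrite ncpoly_eval_append -(find_rule_sound def_p0) /word_eval !big_cons mulrA.
Qed.

Lemma reduce_step_sound p : ncpoly_eval (reduce_step rl p).2 = ncpoly_eval p.
Proof.
elim: p => [|t p IH] //=; rewrite ncpoly_eval_cons -IH.
case def_p': (rewrite_word rl t.2) => [p'|] /=; last exact: ncpoly_eval_ins.
by rewrite ncpoly_eval_add ncpoly_eval_scale (rewrite_word_sound def_p').
Qed.

Lemma normalize_sound fuel p : ncpoly_eval (normalize rl fuel p) = ncpoly_eval p.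
Proof.
elim: fuel p => [|n IH] p //=; rewrite -(reduce_step_sound p).
by case: (reduce_step rl p) => [[] p'] /=; rewrite ?IH.
Qed.

Lemma ncexpr_eq_normalize fuel e1 e2 :
  nilp (normalize rl fuel (ncpoly_of (Xadd e1 (Xopp e2)))) ->
  ncexpr_eval e1 = ncexpr_eval e2.
Proof.
move=> /nilP nf0; apply/eqP; rewrite -subr_eq0.
by rewrite -[_ - _]/(ncexpr_eval (Xadd e1 (Xopp e2))) -ncpoly_eval_of -(normalize_sound fuel) nf0
  /ncpoly_eval big_nil.
Qed.

End Rewriting.
End NcpolyEval.

Definition gens (R : nzRingType) (u : 'I_2 -> 'I_2 -> R) : seq R :=
  [:: u i1 i1; u i1 i2; u i2 i1; u i2 i2].

Definition gens_inv (R : unitRingType) (u : 'I_2 -> 'I_2 -> R) : seq R :=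
  gens u ++ [:: (u i1 i1)^-1; (u i2 i2)^-1].

Ltac find_index x l :=
  lazymatch l with
  | x :: _ => constr:(0%N)
  | _ :: ?l' => let n := find_index x l' in constr:(n.+1)
  | _ => fail 100 "nc_ring: unknown atom" x
  end.

Ltac reify_ord o :=
  lazymatch o with ord0 => constr:(false) | ord_max => constr:(true) end.

Ltac reify_scal q s :=
  lazymatch s with
  | q => constr:(Sq 1)
  | q ^+ ?n => constr:(Sq n)
  | (q ^+ ?n)^-1 => constr:(Sqinv n)
  | q^-1 => constr:(Sqinv 1)
  | 1 => constr:(Sone)
  | 0 => constr:(Szero)
  | ?x + ?y =>
      let x' := reify_scal q x in let y' := reify_scal q y in constr:(Sadd x' y')
  | ?x * ?y =>
      let x' := reify_scal q x in let y' := reify_scal q y in constr:(Smul x' y')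
  | - ?x => let x' := reify_scal q x in constr:(Sopp x')
  | ?x ^+ ?n => let x' := reify_scal q x in constr:(Sexp x' n)
  | super_R (R_Omega q) par ?a ?c ?b ?d =>
      let a' := reify_ord a in let c' := reify_ord c in
      let b' := reify_ord b in let d' := reify_ord d in constr:(SRomega a' c' b' d')
  | _ => fail 100 "nc_ring: unknown scalar" s
  end.

Ltac reify_expr q atoms e :=
  lazymatch e with
  | ?x + ?y =>
      let x' := reify_expr q atoms x in let y' := reify_expr q atoms y in
      constr:(Xadd x' y')
  | - ?x => let x' := reify_expr q atoms x in constr:(Xopp x')
  | ?x * ?y =>
      let x' := reify_expr q atoms x in let y' := reify_expr q atoms y in
      constr:(Xmul x' y')
  | ?s *: ?x =>
      let s' := reify_scal q s in let x' := reify_expr q atoms x in constr:(Xscale s' x')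
  | ?x ^+ ?n => let x' := reify_expr q atoms x in constr:(Xexp x' n)
  | 1 => constr:(Xone)
  | 0 => constr:(Xzero)
  | _ => let n := find_index e atoms in constr:(Xatom n)
  end.

(* [H : rules_hold q (nth 0 atoms) rl]; the goal is reified over [atoms] and
   the difference of its sides is normalized with [rl]. *)
Ltac nc_ring H :=
  lazymatch type of H with
  | @rules_hold _ ?q _ ?L _ =>
    let atoms := lazymatch L with nth 0 ?atoms => atoms end in
    let atoms := eval cbv beta iota delta [gens gens_inv cat] in atoms in
    lazymatch goal with
    | q_neq0 : is_true (q != 0) |- ?lhs = ?rhs =>
      let e1 := reify_expr q atoms lhs in
      let e2 := reify_expr q atoms rhs in
      change (ncexpr_eval q L e1 = ncexpr_eval q L e2);
      apply: (ncexpr_eq_normalize (fuel := 1000) q_neq0 H); vm_compute; reflexivity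
    end
  end.

Ltac rules_simpl :=
  rewrite /= /rule_holds /word_eval /= ?big_cons ?big_nil /= ?mulr1 ?addr0 ?scale1r.

Lemma ord2_ind (P : 'I_2 -> Prop) : P i1 -> P i2 -> forall i, P i.
Proof.
move=> P1 P2 [[|[|n]] lt_i2] //.
- by rewrite (_ : Ordinal lt_i2 = i1) //; apply: val_inj.
- by rewrite (_ : Ordinal lt_i2 = i2) //; apply: val_inj.
Qed.

Lemma big_ord2 (V : nmodType) (F : 'I_2 -> V) : \sum_(i < 2) F i = F i1 + F i2.
Proof. by rewrite big_ord_recl big_ord1; congr (_ + F _); apply: val_inj. Qed.

Definition kappa : scal := Sadd Sone (Sopp (Sq 2)).

(* The relations oriented towards the ordered monomials a^i d^j b^e c^f, where
   the atoms 0, 1, 2, 3 are a, b, c, d as in [gens]. *)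
Definition GL_rules : seq rule := [::
  (1, 0, [:: (Sone, [:: 0; 1])]);
  (2, 0, [:: (Sq 2, [:: 0; 2])]);
  (1, 3, [:: (Sone, [:: 3; 1])]);
  (2, 3, [:: (Sq 2, [:: 3; 2])]);
  (2, 1, [:: (Sopp (Sq 2), [:: 1; 2])]);
  (1, 1, [::]); (2, 2, [::]);
  (3, 0, [:: (Sone, [:: 0; 3]); (kappa, [:: 1; 2])])]%N.

Section Relations.
Variables (k : fieldType) (q : k).
Hypothesis q_neq0 : q != 0.

Lemma GL_rules_hold (A : algType k) (u : 'I_2 -> 'I_2 -> A) :
  GL_rel q u -> rules_hold q (nth 0 (gens u)) GL_rules.
Proof.
case=> [ba [ca [db [dc [cb [da [bb cc]]]]]]]; rules_simpl.
do !split => //; first by rewrite dc scalerA mulfV ?expf_neq0 // scale1r.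
by rewrite -da addrC subrK.
Qed.

Lemma GL_to_FRT (A : algType k) (u : 'I_2 -> 'I_2 -> A) :
  GL_rel q u -> FRT_rel (super_R (R_Omega q) par) par u.
Proof.
move=> /GL_rules_hold rules a b c d.
by elim/ord2_ind: a; elim/ord2_ind: b; elim/ord2_ind: c; elim/ord2_ind: d;
  rewrite !big_ord2; nc_ring rules.
Qed.

Lemma eq_of_scaled_diff (V : lmodType k) (P Q X Y : V) (s : k) :
  P = Q -> X - Y = s *: (P - Q) -> X = Y.
Proof. by move=> -> /eqP; rewrite subrr scaler0 subr_eq0 => /eqP. Qed.

Lemma eq0_of_scaled_diff (V : lmodType k) (P Q X : V) (s : k) :
  s != 0 -> P = Q -> s *: X = P - Q -> X = 0.
Proof. by move=> s_neq0 -> /eqP; rewrite subrr scaler_eq0 (negPf s_neq0) => /eqP. Qed.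

(* The squares b^2 and c^2 occur in the FRT relations only with coefficient
   +-(q + q^-1), which is why q^2 + 1 != 0 is needed. *)
Lemma FRT_to_GL (A : algType k) (u : 'I_2 -> 'I_2 -> A) :
  q ^+ 2 + 1 != 0 -> FRT_rel (super_R (R_Omega q) par) par u -> GL_rel q u.
Proof.
move=> q2D1_neq0 frt; have no_rules : rules_hold q (nth 0 (gens u)) [::] by [].
have qDV_neq0 : q + q^-1 != 0.
  by rewrite -[q + _](mulfK q_neq0) mulrDl mulVf // -expr2 mulf_neq0 // invr_eq0.
rewrite /GL_rel /GL_relP /=; do !split; [
  apply: (eq_of_scaled_diff (s := - q^-1) (frt i1 i1 i1 i2)) |
  apply: (eq_of_scaled_diff (s := - q) (frt i1 i2 i1 i1)) |
  apply: (eq_of_scaled_diff (s := q^-1) (frt i1 i2 i2 i2)) |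
  apply: (eq_of_scaled_diff (s := q^-1) (frt i2 i2 i1 i2)) |
  apply: (eq_of_scaled_diff (s := - q) (frt i1 i2 i2 i1)) |
  apply: (eq_of_scaled_diff (s := q) (frt i2 i1 i2 i1)) |
  apply: (eq0_of_scaled_diff qDV_neq0 (frt i1 i1 i2 i2)) |
  apply: (eq0_of_scaled_diff qDV_neq0 (esym (frt i2 i2 i1 i1)))];
  by rewrite !big_ord2; nc_ring no_rules.
Qed.

End Relations.

Lemma R_Omega_superizable (k : fieldType) (q : k) : superizable (R_Omega q) par.
Proof.
by move=> a c b d; elim/ord2_ind: a; elim/ord2_ind: c; elim/ord2_ind: b;
  elim/ord2_ind: d.
Qed.

Lemma GL_rel_id2 (k : fieldType) (q : k) : GL_rel q (@id2 k^o).
Proof. by rewrite /GL_rel /GL_relP /id2 /= !(mulr0, mul0r, scaler0, subrr). Qed.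

Lemma sdet_id2 (k : fieldType) : sdet (@id2 k) = 1.
Proof. by rewrite /sdet /id2 /= invr1 !mulr1 mul0r subr0. Qed.

Definition shift_rules (n : nat) (rl : seq rule) : seq rule :=
  [seq ((n + r.1.1)%N, (n + r.1.2)%N, [seq (t.1, map (addn n) t.2) | t <- r.2]) | r <- rl].

Definition odd_gen (i : nat) : bool := (i == 1)%N || (i == 2)%N.

(* The atoms [i < n] come from [x] and the atoms [n + j] from [y]; among the
   generators only b and c (atoms 1 and 2) are odd. *)
Definition cross_rules (n : nat) : seq rule :=
  [seq ((n + j)%N, i,
        [:: (if odd_gen i && odd_gen j then Sopp Sone else Sone, [:: i; (n + j)%N])])
  | j <- iota 0 n, i <- iota 0 n].

Section Coproduct.
Variables (k : fieldType) (q : k) (B : algType k) (x y : 'I_2 -> 'I_2 -> B).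
Hypothesis q_neq0 : q != 0.

Lemma supercomm_swap : supercomm par x y ->
  forall i j k l, y k l * x i j =
    (-1) ^+ ((odd (par i) (+) odd (par j)) && (odd (par k) (+) odd (par l))) *
      (x i j * y k l).
Proof.
move=> xy i j k' l.
have -> : y k' l * x i j =
    (-1) ^+ ((par i + par j) * (par k' + par l)) * (x i j * y k' l).
  by rewrite xy mulrA -expr2 sqrr_sign mul1r.
by rewrite -signr_odd oddM !oddD.
Qed.

Lemma cross_rules_hold :
  supercomm par x y -> rules_hold q (nth 0 (gens x ++ gens y)) (cross_rules 4).
Proof.
move=> xy; rules_simpl; rewrite !(supercomm_swap xy) /par /=.
by rewrite ?expr0 ?expr1 ?mul1r ?mulN1r ?scaleN1r.
Qed.

Lemma GL_rel_mxprod :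
  GL_rel q x -> GL_rel q y -> supercomm par x y -> GL_rel q (mxprod x y).
Proof.
move=> /(GL_rules_hold q_neq0) x_rules /(GL_rules_hold q_neq0) y_rules xy.
have rules : rules_hold q (nth 0 (gens x ++ gens y))
    (GL_rules ++ shift_rules 4 GL_rules ++ cross_rules 4).
  by rewrite 2!rules_hold_cat; split;
    [move: x_rules | split; [move: y_rules | exact: cross_rules_hold xy]]; rules_simpl.
by rewrite /GL_rel /GL_relP /mxprod !big_ord2 /=; do !split; nc_ring rules.
Qed.

End Coproduct.

Definition GL_unit_rules : seq rule :=
  [:: (0, 4, [:: (Sone, [::])]); (4, 0, [:: (Sone, [::])]);
      (3, 5, [:: (Sone, [::])]); (5, 3, [:: (Sone, [::])])]%N.

Definition GL_inv_comm_rules : seq rule :=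
  [:: (1, 4, [:: (Sone, [:: 4; 1])]); (2, 4, [:: (Sqinv 2, [:: 4; 2])]);
      (1, 5, [:: (Sone, [:: 5; 1])]); (2, 5, [:: (Sqinv 2, [:: 5; 2])])]%N.

Definition GL_inv_cross_rules : seq rule :=
  [:: (3, 4, [:: (Sone, [:: 4; 3]); (Sopp (Smul kappa (Sqinv 2)), [:: 4; 4; 1; 2])]);
      (5, 0, [:: (Sone, [:: 0; 5]); (Sopp (Smul kappa (Sqinv 2)), [:: 5; 5; 1; 2])])]%N.

Definition GL_inv_inv_rule : rule :=
  (5, 4, [:: (Sone, [:: 4; 5]); (Smul kappa (Sqinv 4), [:: 5; 4; 4; 5; 1; 2])])%N.

Definition GL_inv_rules : seq rule :=
  GL_rules ++ GL_unit_rules ++ GL_inv_comm_rules ++ GL_inv_cross_rules ++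
  [:: GL_inv_inv_rule].

Section Inverses.
Variables (k : fieldType) (q : k) (A : unitAlgType k) (u : 'I_2 -> 'I_2 -> A).
Hypotheses (q_neq0 : q != 0) (u_rel : GL_rel q u).
Hypotheses (a_unit : u i1 i1 \is a GRing.unit) (d_unit : u i2 i2 \is a GRing.unit).

(* Each rule [v * w^-1 = r] (resp. [w^-1 * v = r]) is checked as [v = r * w]
   (resp. [v = w * r]) by the rules derived before it. *)
Lemma GL_inv_rules_hold : rules_hold q (nth 0 (gens_inv u)) GL_inv_rules.
Proof.
have rules0 : rules_hold q (nth 0 (gens_inv u)) (GL_rules ++ GL_unit_rules).
  rewrite rules_hold_cat; split; first by move: (GL_rules_hold q_neq0 u_rel); rules_simpl.
  by rules_simpl; rewrite !(mulrV, mulVr).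
have rules1 : rules_hold q (nth 0 (gens_inv u))
    (GL_rules ++ GL_unit_rules ++ GL_inv_comm_rules).
  rewrite catA rules_hold_cat; split => //; rules_simpl; do !split;
    apply: (canLR (mulrK _)) => //; nc_ring rules0.
have rules2 : rules_hold q (nth 0 (gens_inv u))
    (GL_rules ++ GL_unit_rules ++ GL_inv_comm_rules ++ GL_inv_cross_rules).
  rewrite 2!catA rules_hold_cat -catA; split => //; rules_simpl; split; last split => //.
    by apply: (canLR (mulrK _)) => //; nc_ring rules1.
  by apply: (canLR (mulKr _)) => //; nc_ring rules1.
rewrite /GL_inv_rules 3!catA rules_hold_cat -!catA; split => //; rules_simpl; split => //.
by apply: (canLR (mulKr _)) => //; nc_ring rules2.
Qed.

Lemma antipode_mxprod :
  mxprod (antipode u) u = id2 /\ mxprod u (antipode u) = id2.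
Proof.
have rules := GL_inv_rules_hold.
by split; apply: functional_extensionality => i; apply: functional_extensionality => j;
  elim/ord2_ind: i; elim/ord2_ind: j;
  rewrite /mxprod big_ord2 /antipode /id2 /= ?mulr1n ?mulr0n; nc_ring rules.
Qed.

(* [S(u)_11 = (a - b d^-1 c)^-1] and [S(u)_22 = (d - c a^-1 b)^-1]. *)
Lemma antipode_diag_unit :
  antipode u i1 i1 \is a GRing.unit /\ antipode u i2 i2 \is a GRing.unit.
Proof.
have rules := GL_inv_rules_hold.
split; apply/unitrP; rewrite /antipode /=.
  by exists (u i1 i1 - u i1 i2 * (u i2 i2)^-1 * u i2 i1); split; nc_ring rules.
by exists (u i2 i2 - u i2 i1 * (u i1 i1)^-1 * u i1 i2); split; nc_ring rules.
Qed.

Lemma GL_relP_antipode :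
  GL_relP q (fun i j k l =>
    (-1) ^+ ((par i + par j) * (par k + par l)) *: (antipode u k l * antipode u i j)).
Proof.
have rules := GL_inv_rules_hold.
by rewrite /GL_relP /antipode /=; do !split; nc_ring rules.
Qed.

Lemma sdet_central i j : sdet u * u i j = u i j * sdet u.
Proof.
have rules := GL_inv_rules_hold.
by elim/ord2_ind: i; elim/ord2_ind: j; rewrite /sdet; nc_ring rules.
Qed.

End Inverses.

Lemma sdet_parity_inv (k : fieldType) (A : unitAlgType k) (u : 'I_2 -> 'I_2 -> A) :
  sdet (parity_inv par u) = sdet u.
Proof.
rewrite /sdet /parity_inv /par /= !addn0 !add0n (exprD _ 1 1) !expr1 expr0 mulrNN mulr1.
by rewrite !scale1r !scaleN1r mulNr mulrNN.
Qed.

Lemma invr_uniq (R : unitRingType) (m e : R) : e * m = 1 -> m * e = 1 -> m^-1 = e.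
Proof.
move=> em me; have m_unit : m \is a GRing.unit by apply/unitrP; exists e.
by rewrite -[e](mulKr m_unit) me mulr1.
Qed.

Section GroupLike.
Variables (k : fieldType) (q : k) (B : unitAlgType k) (x y : 'I_2 -> 'I_2 -> B).
Hypotheses (q_neq0 : q != 0) (x_rel : GL_rel q x) (y_rel : GL_rel q y).
Hypotheses (x11_unit : x i1 i1 \is a GRing.unit) (x22_unit : x i2 i2 \is a GRing.unit).
Hypotheses (y11_unit : y i1 i1 \is a GRing.unit) (y22_unit : y i2 i2 \is a GRing.unit).
Hypothesis xy : supercomm par x y.

Lemma supercomm_diagl i r s : GRing.comm (y r s) (x i i).
Proof. by rewrite /GRing.comm (supercomm_swap xy) addbb /= mul1r. Qed.

Lemma supercomm_diagr r i j : GRing.comm (x i j) (y r r).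
Proof. by rewrite /GRing.comm (supercomm_swap xy) addbb andbF mul1r. Qed.

Lemma cross_inv_rules_hold :
  rules_hold q (nth 0 (gens_inv x ++ gens_inv y)) (cross_rules 6).
Proof.
rules_simpl; rewrite !(supercomm_swap xy) /par /= ?expr0 ?expr1 ?mul1r ?mulN1r ?scaleN1r.
do !split => //; first [
  exact: commrV (supercomm_diagl _ _ _) |
  exact: commr_sym (commrV (supercomm_diagr _ _ _)) |
  exact: commrV (commr_sym (commrV (supercomm_diagr _ _ _)))].
Qed.

Lemma GL_inv_mxprod_rules_hold :
  rules_hold q (nth 0 (gens_inv x ++ gens_inv y))
    (GL_inv_rules ++ shift_rules 6 GL_inv_rules ++ cross_rules 6).
Proof.
rewrite 2!rules_hold_cat; split; [|split; last exact: cross_inv_rules_hold].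
  by move: (GL_inv_rules_hold q_neq0 x_rel x11_unit x22_unit); rules_simpl.
by move: (GL_inv_rules_hold q_neq0 y_rel y11_unit y22_unit); rules_simpl.
Qed.

(* [(xy)_11 = x_11 y_11 + x_12 y_21] and [(xy)_22 = x_22 y_22 + x_21 y_12],
   where the second summands square to zero. *)
Lemma mxprod_diag_unit :
  mxprod x y i1 i1 \is a GRing.unit /\ mxprod x y i2 i2 \is a GRing.unit.
Proof.
have rules := GL_inv_mxprod_rules_hold.
rewrite /mxprod !big_ord2; split; apply/unitrP.
  exists ((y i1 i1)^-1 * (x i1 i1)^-1 -
          (y i1 i1)^-1 * (x i1 i1)^-1 * (x i1 i2 * y i2 i1) * (y i1 i1)^-1 * (x i1 i1)^-1).
  by split; nc_ring rules.
exists ((y i2 i2)^-1 * (x i2 i2)^-1 -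
        (y i2 i2)^-1 * (x i2 i2)^-1 * (x i2 i1 * y i1 i2) * (y i2 i2)^-1 * (x i2 i2)^-1).
by split; nc_ring rules.
Qed.

Lemma mxprod22_inv : (mxprod x y i2 i2)^-1 =
  (y i2 i2)^-1 * (x i2 i2)^-1 -
  (y i2 i2)^-1 * (x i2 i2)^-1 * (x i2 i1 * y i1 i2) * (y i2 i2)^-1 * (x i2 i2)^-1.
Proof.
have rules := GL_inv_mxprod_rules_hold.
by apply: invr_uniq; rewrite /mxprod !big_ord2; nc_ring rules.
Qed.

Lemma sdet_mxprod : sdet (mxprod x y) = sdet x * sdet y.
Proof.
have rules := GL_inv_mxprod_rules_hold.
by rewrite /sdet mxprod22_inv /mxprod !big_ord2; nc_ring rules.
Qed.

End GroupLike.

Theorem mainTheorem9 (k : fieldType) (q : k) (hq : q != 0)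
    (hq2 : q ^+ 2 + 1 != 0) :
  (* R_Omega is superizable w.r.t. p(1)=0, p(2)=1 *)
      superizable (R_Omega q) par /\
      (* presentation of A(underline R_Omega): the FRT relations are
         equivalent to the listed relations in every k-algebra *)
      (forall (A : algType k) (u : 'I_2 -> 'I_2 -> A),
          FRT_rel (super_R (R_Omega q) par) par u <-> GL_rel q u) /\
      (* the matrix super-coproduct u |-> u (x) u respects the relations *)
      (forall (B : algType k) (x y : 'I_2 -> 'I_2 -> B),
          GL_rel q x -> GL_rel q y -> supercomm par x y ->
          GL_rel q (mxprod x y)) /\
      (* the counit u |-> id respects the relations *)
      GL_rel q (@id2 k^o) /\
      (* antipode of GL^Omega_q(1|1) *)
      (forall (A : unitAlgType k) (u : 'I_2 -> 'I_2 -> A),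
          GL_rel q u -> u i1 i1 \is a GRing.unit -> u i2 i2 \is a GRing.unit ->
          [/\ mxprod (antipode u) u = id2,
              mxprod u (antipode u) = id2,
              antipode u i1 i1 \is a GRing.unit,
              antipode u i2 i2 \is a GRing.unit &
              GL_relP q (fun i j k l =>
                 (-1) ^+ ((par i + par j) * (par k + par l)) *:
                   (antipode u k l * antipode u i j))]) /\
      (* the super-determinant is central and even *)
      (forall (A : unitAlgType k) (u : 'I_2 -> 'I_2 -> A),
          GL_rel q u -> u i1 i1 \is a GRing.unit -> u i2 i2 \is a GRing.unit ->
          (forall i j, sdet u * u i j = u i j * sdet u) /\
          sdet (parity_inv par u) = sdet u) /\
      (* the super-determinant is group-like: Delta sdet = sdet (x) sdet *)
      (forall (B : unitAlgType k) (x y : 'I_2 -> 'I_2 -> B),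
          GL_rel q x -> GL_rel q y ->
          x i1 i1 \is a GRing.unit -> x i2 i2 \is a GRing.unit ->
          y i1 i1 \is a GRing.unit -> y i2 i2 \is a GRing.unit ->
          supercomm par x y ->
          [/\ mxprod x y i1 i1 \is a GRing.unit,
              mxprod x y i2 i2 \is a GRing.unit &
              sdet (mxprod x y) = sdet x * sdet y]) /\
      (* and eps(sdet) = 1 *)
      sdet (@id2 k) = 1.
Proof.
split; first exact: R_Omega_superizable.
split; first by move=> A u; split; [exact: FRT_to_GL | exact: GL_to_FRT].
split; first by move=> B x y; exact: GL_rel_mxprod.
split; first exact: GL_rel_id2.
split.
  move=> A u u_rel a_unit d_unit.
  have [S_u u_S] := antipode_mxprod hq u_rel a_unit d_unit.
  have [S11_unit S22_unit] := antipode_diag_unit hq u_rel a_unit d_unit.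
  by split; last exact: GL_relP_antipode hq u_rel a_unit d_unit.
split.
  move=> A u u_rel a_unit d_unit; split; last exact: sdet_parity_inv.
  exact: sdet_central hq u_rel a_unit d_unit.
split; last exact: sdet_id2.
move=> B x y x_rel y_rel x11_unit x22_unit y11_unit y22_unit xy.
have [xy11_unit xy22_unit] := mxprod_diag_unit hq x_rel y_rel x11_unit x22_unit y11_unit y22_unit xy.
by split; last exact: sdet_mxprod hq x_rel y_rel x11_unit x22_unit y11_unit y22_unit xy.
Qed.
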